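(* Let $X$ be a shift space, let $n\ge1$, $m\ge0$, and let $V\subseteq\mathcal L(X)$ be a finite $X$-maximal prefix code. If $\mathcal E_{\mathcal L_n(X),V}(w)$ is a tree for every $w\in\mathcal L_{\ge m}(X)$, then for every $w\in\mathcal L_{\ge m}(X)$ and every $\ell\in\mathcal L_{\ge n-1}(X)$ with $\ell w\in\mathcal L(X)$, the graph $\mathcal E_{A,V}(\ell w)$ is a tree.
   Context: $A$ is a finite alphabet; a shift space is a closed shift-invariant subset $X\subseteq A^{\mathbb Z}$; $\mathcal L(X)$ is its set of finite factors, $\mathcal L_n(X)=\mathcal L(X)\cap A^n$, $\mathcal L_{\ge n}(X)=\bigcup_{k\ge n}\mathcal L_k(X)$. A prefix code is a set of words none of which is a proper prefix of another; a prefix code $V\subseteq\mathcal L(X)$ is $X$-maximal if it is not properly contained in a prefix code contained in $\mathcal L(X)$. For $U,V\subseteq A^*$ and $w\in\mathcal L(X)$, let $L_U(w)=\{u\in U: uw\in\mathcal L(X)\}$ and $R_V(w)=\{v\in V: wv\in\mathcal L(X)\}$; the generalized extension graph $\mathcal E_{U,V}(w)$ is the undirected bipartite graph with vertex set the disjoint union of $L_U(w)$ and $R_V(w)$ and an edge $(u,v)$ iff $uwv\in\mathcal L(X)$. (Here $A$ denotes the set of one-letter words.) *)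

From HB Require Import structures.
From mathcomp Require Import all_boot all_order all_algebra.
Set Implicit Arguments. Unset Strict Implicit. Unset Printing Implicit Defensive.
Import GRing.Theory Num.Theory.

Definition window (A : Type) (x : int -> A) (i : int) (n : nat) : seq A :=
  mkseq (fun k => x (i + k%:Z)%R) n.

Definition shift (A : Type) (x : int -> A) : int -> A := fun i => x (i + 1)%R.

Definition shift_invariant (A : Type) (X : (int -> A) -> Prop) : Prop :=
  forall x : int -> A, X x <-> X (shift x).

(* X is closed in the product topology: x lies in X as soon as every
   central window x_[-n, n] agrees with some point of X. *)
Definition closed_shift (A : Type) (X : (int -> A) -> Prop) : Prop :=
  forall x : int -> A,
    (forall n : nat, exists y, X y /\ forall i : int, (`|i| <= n%:Z)%R -> y i = x i) ->
    X x.

Definition shift_space (A : finType) (X : (int -> A) -> Prop) : Prop :=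
  shift_invariant X /\ closed_shift X.

Definition inL (A : Type) (X : (int -> A) -> Prop) (w : seq A) : Prop :=
  exists x, X x /\ exists i : int, w = window x i (size w).

Definition Ln (A : Type) (X : (int -> A) -> Prop) (n : nat) (w : seq A) : Prop :=
  inL X w /\ size w = n.

(* The alphabet A viewed as the set of one-letter words *)
Definition letters (A : Type) (w : seq A) : Prop := size w = 1%N.

Definition prefix_code (A : eqType) (W : seq A -> Prop) : Prop :=
  forall u v, W u -> W v -> prefix u v -> u = v.

Definition X_maximal_prefix_code (A : finType) (X : (int -> A) -> Prop)
  (V : seq (seq A)) : Prop :=
  prefix_code (fun v => v \in V) /\ (forall v, v \in V -> inL X v) /\
  forall W : seq A -> Prop,
    prefix_code W -> (forall w, W w -> inL X w) ->
    (forall v, v \in V -> W v) -> forall w, W w -> w \in V.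

(* vertices: inl u for u in L_U(w), inr v for v in R_V(w) (disjoint union) *)
Definition ext_vertex (A : Type) (X : (int -> A) -> Prop) (U V : seq A -> Prop)
  (w : seq A) (a : seq A + seq A) : Prop :=
  match a with
  | inl u => U u /\ inL X (u ++ w)
  | inr v => V v /\ inL X (w ++ v)
  end.

Definition ext_edge (A : Type) (X : (int -> A) -> Prop) (U V : seq A -> Prop)
  (w : seq A) (a b : seq A + seq A) : Prop :=
  ext_vertex X U V w a /\ ext_vertex X U V w b /\
  match a, b with
  | inl u, inr v => inL X (u ++ w ++ v)
  | inr v, inl u => inL X (u ++ w ++ v)
  | _, _ => False
  end.

Fixpoint walk (T : Type) (adj : T -> T -> Prop) (a : T) (p : seq T) : Prop :=
  match p with
  | [::] => True
  | b :: p' => adj a b /\ walk adj b p'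
  end.

Definition connected_graph (T : Type) (vert : T -> Prop) (adj : T -> T -> Prop) : Prop :=
  forall a b, vert a -> vert b -> exists p, walk adj a p /\ last a p = b.

(* a cycle: distinct vertices x0 ... x_{k-1}, k >= 3, consecutive adjacent,
   and x_{k-1} adjacent to x0 *)
Definition has_cycle (T : eqType) (adj : T -> T -> Prop) : Prop :=
  exists (x : T) (c : seq T),
    (2 <= size c)%N /\ uniq (x :: c) /\ walk adj x c /\ adj (last x c) x.

Definition is_tree (T : eqType) (vert : T -> Prop) (adj : T -> T -> Prop) : Prop :=
  (exists a, vert a) /\ connected_graph vert adj /\ ~ has_cycle adj.

Definition ext_graph_is_tree (A : finType) (X : (int -> A) -> Prop)
  (U V : seq A -> Prop) (w : seq A) : Prop :=
  is_tree (ext_vertex X U V w) (ext_edge X U V w).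

From HB Require Import structures.
From mathcomp Require Import all_boot all_order all_algebra.
Set Implicit Arguments. Unset Strict Implicit. Unset Printing Implicit Defensive.
Import GRing.Theory Num.Theory.

(* Write l = t r with |t| = n - 1.  Deleting the first n - 1 letters of left
   extensions maps E_{L_n,V}(lw) onto E_{A,V}(lw), so connectedness passes
   down; appending t to left letters embeds E_{A,V}(lw) into E_{L_n,V}(rw), so
   acyclicity passes down.  Neither argument uses that X is a shift space or
   that V is a maximal prefix code. *)

Section Factors.

Variables (A : eqType) (X : (int -> A) -> Prop).

Lemma size_window (x : int -> A) i k : size (window x i k) = k.
Proof. by rewrite /window size_mkseq. Qed.

Lemma window_cat (x : int -> A) i a b :
  window x i (a + b) = window x i a ++ window x (i + a%:Z)%R b.
Proof.
rewrite /window /mkseq iotaD map_cat; congr (_ ++ _).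
rewrite add0n -{1}(addn0 a) iotaDl -map_comp; apply: eq_map => k /=.
by rewrite PoszD addrA.
Qed.

Lemma inL_cat (s t : seq A) : inL X (s ++ t) -> inL X s /\ inL X t.
Proof.
move=> [x [Xx [i]]]; rewrite size_cat window_cat => /eqP.
rewrite eqseq_cat ?size_window // => /andP[/eqP s_win /eqP t_win].
by split; exists x; split => //; [exists i | exists (i + (size s)%:Z)%R].
Qed.

Lemma inL_catl (s t : seq A) : inL X (s ++ t) -> inL X s.
Proof. by case/inL_cat. Qed.

Lemma inL_catr (s t : seq A) : inL X (s ++ t) -> inL X t.
Proof. by case/inL_cat. Qed.

Lemma inL_extend_left (s : seq A) k :
  inL X s -> exists2 p, size p = k & inL X (p ++ s).
Proof.
move=> [x [Xx [i s_win]]]; exists (window x (i - k%:Z)%R k).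
  exact: size_window.
exists x; split => //; exists (i - k%:Z)%R.
by rewrite size_cat size_window window_cat subrK -s_win.
Qed.

End Factors.

Lemma catIs (T : eqType) (t : seq T) : injective (cat^~ t).
Proof.
move=> u u' /= eq_ut; have eq_size : size u = size u'.
  by move/(congr1 size): eq_ut; rewrite !size_cat => /addIn.
by move/eqP: eq_ut; rewrite eqseq_cat // => /andP[/eqP].
Qed.

Section GraphMorphisms.

Variables (T T' : Type) (adj : T -> T -> Prop) (adj' : T' -> T' -> Prop).
Variable f : T -> T'.
Hypothesis f_adj : forall a b, adj a b -> adj' (f a) (f b).

Lemma walk_map a p : walk adj a p -> walk adj' (f a) (map f p).
Proof. by elim: p a => //= b p IHp a [/f_adj ab /IHp]; split. Qed.

Lemma connected_graph_image (vert : T -> Prop) (vert' : T' -> Prop) :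
  (forall b, vert' b -> exists2 a, vert a & f a = b) ->
  connected_graph vert adj -> connected_graph vert' adj'.
Proof.
move=> f_onto conn _ _ /f_onto[a va <-] /f_onto[b vb <-].
have [p [ab_walk ab_last]] := conn a b va vb.
by exists (map f p); rewrite last_map ab_last; split; first exact: walk_map.
Qed.

End GraphMorphisms.

Lemma has_cycle_inj (T T' : eqType) (adj : T -> T -> Prop)
    (adj' : T' -> T' -> Prop) (f : T -> T') :
  injective f -> (forall a b, adj a b -> adj' (f a) (f b)) ->
  has_cycle adj -> has_cycle adj'.
Proof.
move=> f_inj f_adj [x [c [c_size [c_uniq [c_walk c_close]]]]].
exists (f x), (map f c); rewrite size_map -map_cons map_inj_uniq // last_map.
by do ![split] => //; [exact: (walk_map f_adj) | exact: f_adj].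
Qed.

Section ExtensionGraphMorphism.

Variables (A : finType) (X : (int -> A) -> Prop) (V : seq A -> Prop).

Definition map_left (f : seq A -> seq A) (c : seq A + seq A) : seq A + seq A :=
  match c with inl u => inl (f u) | inr v => inr v end.

Lemma map_left_inj f : injective f -> injective (map_left f).
Proof. by move=> f_inj [u|v] [u'|v'] //= [/f_inj ->]. Qed.

Variables (U U' : seq A -> Prop) (w w' : seq A) (f : seq A -> seq A).
Hypothesis f_vertex : forall u, U u -> inL X (u ++ w) -> U' (f u).
Hypothesis f_left : forall u s, U u -> inL X (u ++ w ++ s) -> inL X (f u ++ w' ++ s).
Hypothesis w_right : forall s, inL X (w ++ s) -> inL X (w' ++ s).

Lemma ext_vertex_map_left c :
  ext_vertex X U V w c -> ext_vertex X U' V w' (map_left f c).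
Proof.
case: c => [u [Uu uw] | v [Vv wv]] /=; split => //; first exact: f_vertex.
- by rewrite -[w']cats0; apply: f_left; rewrite ?cats0.
- exact: w_right.
Qed.

Lemma ext_edge_map_left a b :
  ext_edge X U V w a b -> ext_edge X U' V w' (map_left f a) (map_left f b).
Proof.
move=> [va [vb ab]]; do 2 (split; first exact: ext_vertex_map_left).
by case: a b ab va vb => [u|v] [u'|v'] //= uwv [] // Uu _ [] // Uu' _; apply: f_left.
Qed.

End ExtensionGraphMorphism.

Section DeleteLeftPrefix.

Variables (A : finType) (X : (int -> A) -> Prop) (V : seq A -> Prop).
Variables (n : nat) (w : seq A).
Hypothesis n_gt0 : (0 < n)%N.

Lemma ext_edge_drop a b :
  ext_edge X (Ln X n) V w a b ->
  ext_edge X (@letters A) V w (map_left (drop n.-1) a) (map_left (drop n.-1) b).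
Proof.
apply: ext_edge_map_left => // [u [_ u_size] _ | u s _].
  by rewrite /letters size_drop u_size -subn1 subKn.
by rewrite -{1}(cat_take_drop n.-1 u) -catA => /inL_catr.
Qed.

Lemma ext_vertex_drop_onto c :
  ext_vertex X (@letters A) V w c ->
  exists2 c', ext_vertex X (Ln X n) V w c' & map_left (drop n.-1) c' = c.
Proof.
case: c => [u [u_size uw] | v wv]; last by exists (inr v).
have [p p_size puw] := inL_extend_left n.-1 uw.
exists (inl (p ++ u)); last by rewrite /= -p_size drop_size_cat.
split; last by rewrite -catA.
split; first by move: puw; rewrite catA => /inL_catl.
by rewrite size_cat p_size u_size addn1 prednK.
Qed.

End DeleteLeftPrefix.

Lemma ext_edge_append (A : finType) (X : (int -> A) -> Prop) (V : seq A -> Prop)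
    (t r w : seq A) a b :
  ext_edge X (@letters A) V (t ++ r ++ w) a b ->
  ext_edge X (Ln X (size t).+1) V (r ++ w) (map_left (cat^~ t) a)
    (map_left (cat^~ t) b).
Proof.
apply: ext_edge_map_left => [u u_size utrw | u s _ | s].
- by split; [rewrite catA in utrw; exact: inL_catl utrw | rewrite size_cat u_size].
- by rewrite !catA.
- by rewrite -catA => /inL_catr.
Qed.

Theorem mainTheorem15 (A : finType) (X : (int -> A) -> Prop)
  (HX : shift_space X) (n m : nat) (V : seq (seq A))
  (Hn : (1 <= n)%N) (HV : X_maximal_prefix_code X V)
  (Htree : forall w : seq A, inL X w -> (m <= size w)%N ->
             ext_graph_is_tree X (Ln X n) (fun v => v \in V) w) :
  forall w l : seq A, inL X w -> (m <= size w)%N ->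
    inL X l -> (n - 1 <= size l)%N -> inL X (l ++ w) ->
    ext_graph_is_tree X (@letters A) (fun v => v \in V) (l ++ w).
Proof.
move=> w l _ m_le_w _ n_le_l lw_in.
have tree_ext s : inL X (s ++ w) -> ext_graph_is_tree X (Ln X n) (fun v => v \in V) (s ++ w).
  by move=> sw_in; apply: Htree sw_in _; rewrite size_cat (leq_trans m_le_w (leq_addl _ _)).
set t := take n.-1 l; set r := drop n.-1 l.
have l_tr : l = t ++ r by rewrite cat_take_drop.
have t_size : (size t).+1 = n by rewrite size_takel ?prednK // -subn1.
have [_ [lw_conn _]] := tree_ext l lw_in.
have [_ [_ rw_acyclic]] : ext_graph_is_tree X (Ln X n) (fun v => v \in V) (r ++ w).
  by apply: tree_ext; move: lw_in; rewrite l_tr -catA => /inL_catr.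
split; [|split].
- have [p p_size plw_in] := inL_extend_left 1 lw_in.
  by exists (inl p).
- apply: connected_graph_image lw_conn; first exact: ext_edge_drop.
  exact: ext_vertex_drop_onto.
- move=> lw_cycle; apply: rw_acyclic; rewrite -t_size.
  apply: has_cycle_inj (map_left_inj (@catIs _ t)) (@ext_edge_append _ _ _ t r w) _.
  by rewrite catA -l_tr.
Qed.
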